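(* Let $\mathcal{S}=\mathcal{S}_1\times\cdots\times\mathcal{S}_m$ with each $\mathcal{S}_i$ finite of cardinality $S_i$, and let $P,P'$ be probability measures on $\mathcal{S}$ with product form $P(y)=\prod_{i=1}^m P_i(y_i)$ and $P'(y)=\prod_{i=1}^m P'_i(y_i)$ for all $y=(y_1,\dots,y_m)\in\mathcal{S}$, where $P_i,P'_i$ are probability distributions on $\mathcal{S}_i$. Assume that for every $i\in[m]$ there exist $\xi_i,\xi'_i>0$ such that $|P'_i(y_i)-P_i(y_i)|\le\sqrt{P_i(y_i)\xi_i}+\xi'_i$ for all $y_i\in\mathcal{S}_i$. Then for every function $f:\mathcal{S}\to[0,\infty)$, $$\sum_{y\in\mathcal{S}}|P(y)-P'(y)|f(y)\le \max_{y\in\prod_{i=1}^m\mathrm{supp}(P_i)}f(y)\sum_{i=1}^m\sum_{y_i\in\mathcal{S}_i}\sqrt{P_i(y_i)\xi_i}\;+\;3\max_{y\in\mathcal{S}}f(y)\sum_{i=1}^m\xi'_iS_i .$$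
   Context: $\mathrm{supp}(P_i)=\{y_i\in\mathcal{S}_i: P_i(y_i)>0\}$. *)

From mathcomp Require Import all_boot all_order all_algebra.
Set Implicit Arguments. Unset Strict Implicit. Unset Printing Implicit Defensive.
Import Order.TTheory GRing.Theory Num.Theory.
Local Open Scope ring_scope.

Definition prodSpace (m : nat) (S : 'I_m -> finType) : finType :=
  {dffun forall i : 'I_m, S i}.

Definition is_distr (R : numDomainType) (T : finType) (p : T -> R) : Prop :=
  (forall x, 0 <= p x) /\ \sum_(x : T) p x = 1.

Definition prodMeasure (R : numDomainType) (m : nat) (S : 'I_m -> finType)
  (P : forall i : 'I_m, S i -> R) (y : prodSpace S) : R :=
  \prod_(i < m) P i (y i).

Definition in_prod_supp (R : numDomainType) (m : nat) (S : 'I_m -> finType)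
  (P : forall i : 'I_m, S i -> R) (y : prodSpace S) : bool :=
  [forall i, 0 < P i (y i)].

From mathcomp Require Import all_boot all_order all_algebra.
From mathcomp Require Import lra.
Import Order.TTheory GRing.Theory Num.Theory.
Local Open Scope ring_scope.

(* Write M for the maximum of f over S and M_s for its maximum
   over the product of the supports of the P_i.  Split the sum over y
   according to whether y lies in that product of supports:
   - inside, f y <= M_s, so the contribution is at most M_s * ||P - P'||_1;
   - outside, P y = 0, so the contribution is at most M * P'(outside).
   Two general facts about product distributions on a finite product space
   then finish the proof:
   - (hybrid argument) ||P - P'||_1 <= sum_k ||P_k - P'_k||_1, obtained by
     telescoping through the hybrid measures that use P_i for i < k and P'_i
     for i >= k, each step changing only the k-th factor;
   - (union bound) the P'-mass outside the product of supports is at most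
     sum_k P'_k(complement of supp P_k).
   The closeness hypothesis bounds ||P_k - P'_k||_1 by
   sum_s sqrt(P_k(s) xi_k) + xi'_k S_k and P'_k(complement of supp P_k) by
   xi'_k S_k; the constant 3 leaves room to spare (2 would do). *)

Lemma sum_prodSpace_prod {R : comNzRingType} {m : nat} {S : 'I_m -> finType}
  (F : forall i : 'I_m, S i -> R) :
  \sum_(y : prodSpace S) \prod_(i < m) F i (y i)
  = \prod_(i < m) \sum_(s : S i) F i s.
Proof.
pose G i := [ffun s : S i => F i s].
have -> : \sum_(y : prodSpace S) \prod_(i < m) F i (y i)
          = \sum_(t : fprod S) \prod_(i in 'I_m) G i (t i).
  rewrite (reindex (@dffun_of_fprod _ S)); last first.
    exact/onW_bij/dffun_of_fprod_bij.
  by apply: eq_bigr => t _; apply: eq_bigr => i _; rewrite !ffunE.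
rewrite big_fprod.
rewrite -(bigA_distr_big_dep (fun i j => tag j == i) (fun i j => untag 0 (G i) j)).
apply: eq_bigr => i _.
transitivity (\sum_(s : S i) G i s); last by apply: eq_bigr => s _; rewrite ffunE.
by rewrite (big_tag (fun i s => G i s) i); apply: eq_bigl.
Qed.

Lemma sum_prodSpace_marginal {R : comNzRingType} {m : nat}
  {S : 'I_m -> finType} (k : 'I_m) (F : forall i : 'I_m, S i -> R)
  (F1 : forall i, i != k -> \sum_(s : S i) F i s = 1) :
  \sum_(y : prodSpace S) \prod_(i < m) F i (y i) = \sum_(s : S k) F k s.
Proof.
by rewrite sum_prodSpace_prod (bigD1 k) //= [X in _ * X]big1 ?mulr1.
Qed.

Section ProductMeasures.

Context {R : realDomainType} {m : nat} {S : 'I_m -> finType}.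
Context {P Q : forall i : 'I_m, S i -> R}.
Hypotheses (hP : forall i : 'I_m, is_distr (P i))
           (hQ : forall i : 'I_m, is_distr (Q i)).

Let P_ge0 i s : 0 <= P i s. Proof. by case: (hP i). Qed.
Let Q_ge0 i s : 0 <= Q i s. Proof. by case: (hQ i). Qed.

Lemma not_in_prod_supp {y : prodSpace S} :
  ~~ in_prod_supp P y -> exists k, P k (y k) = 0.
Proof.
by move=> /forallPn[k]; rewrite lt0r P_ge0 andbT negbK => /eqP Pk0; exists k.
Qed.

Definition hybrid (k : nat) (y : prodSpace S) : R :=
  \prod_(i < m) (if (i < k)%N then P i (y i) else Q i (y i)).

Lemma hybrid_step (k : 'I_m) (y : prodSpace S) :
  `|hybrid k.+1 y - hybrid k y|
  = \prod_(i < m) (if i == k then `|P i (y i) - Q i (y i)|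
                   else if (i < k)%N then P i (y i) else Q i (y i)).
Proof.
rewrite /hybrid (bigD1 k) // [X in _ - X](bigD1 k) // [RHS](bigD1 k) //=.
rewrite eqxx ltnSn ltnn.
have -> : \prod_(i < m | i != k) (if (i < k.+1)%N then P i (y i) else Q i (y i))
        = \prod_(i < m | i != k) (if (i < k)%N then P i (y i) else Q i (y i)).
  by apply: eq_bigr => i hik; rewrite ltnS leq_eqVlt (negbTE (hik : (i : nat) != k)).
rewrite -mulrBl normrM [X in _ * X]ger0_norm; last by apply: prodr_ge0 => i _; case: ifP.
by congr (_ * _); apply: eq_bigr => i hik; rewrite (negbTE hik).
Qed.

Lemma prodMeasure_l1_le :
  \sum_(y : prodSpace S) `|prodMeasure P y - prodMeasure Q y|
  <= \sum_(k < m) \sum_(s : S k) `|P k s - Q k s|.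
Proof.
have telescope y :
    prodMeasure P y - prodMeasure Q y = \sum_(k < m) (hybrid k.+1 y - hybrid k y).
  rewrite -(big_mkord xpredT (fun k => hybrid k.+1 y - hybrid k y)).
  rewrite telescope_sumr // /prodMeasure /hybrid.
  by congr (_ - _); apply: eq_bigr => i _; rewrite ltn_ord.
apply: (le_trans (y := \sum_(y : prodSpace S) \sum_(k < m) \prod_(i < m) (if i == k
    then `|P i (y i) - Q i (y i)| else if (i < k)%N then P i (y i) else Q i (y i)))).
  apply: ler_sum => y _; rewrite telescope.
  apply: (le_trans (ler_norm_sum _ _ _)).
  by apply: ler_sum => k _; rewrite hybrid_step.
rewrite exchange_big /=; apply: ler_sum => k _.
rewrite (sum_prodSpace_marginal k (fun i s => if i == k
    then `|P i s - Q i s| else if (i < k)%N then P i s else Q i s)) ?eqxx //.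
by move=> i /negbTE ->; case: (i < k)%N; [case: (hP i) | case: (hQ i)].
Qed.

Lemma prodMeasure_mass_outside_supp :
  \sum_(y : prodSpace S | ~~ in_prod_supp P y) prodMeasure Q y
  <= \sum_(k < m) \sum_(s : S k | P k s == 0) Q k s.
Proof.
pose miss k y := \prod_(i < m)
  (if i == k then (P i (y i) == 0)%:R * Q i (y i) else Q i (y i)).
have miss_ge0 k y : 0 <= miss k y.
  by apply: prodr_ge0 => i _; case: ifP => _ //; rewrite mulr_ge0.
have outside y : ~~ in_prod_supp P y -> prodMeasure Q y <= \sum_(k < m) miss k y.
  move=> /not_in_prod_supp[k Pk0].
  rewrite (bigD1 k) //= -[X in X <= _]addr0 lerD ?sumr_ge0 //.
  rewrite /miss /prodMeasure (bigD1 k) //= [X in _ <= X](bigD1 k) //= Pk0 !eqxx.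
  by rewrite mul1r [X in _ <= _ * X](eq_bigr (fun i => Q i (y i))) // => i /negbTE ->.
apply: (le_trans (y := \sum_(y : prodSpace S) \sum_(k < m) miss k y)).
  rewrite [X in _ <= X](bigID (fun y => ~~ in_prod_supp P y)) /=.
  by rewrite -[X in X <= _]addr0 lerD ?ler_sum // sumr_ge0 // => y _; rewrite sumr_ge0.
rewrite exchange_big /=; apply: ler_sum => k _.
rewrite (sum_prodSpace_marginal k
  (fun i s => if i == k then (P i s == 0)%:R * Q i s else Q i s))
  ?eqxx; last by move=> i /negbTE ->; case: (hQ i).
by rewrite [X in _ <= X]big_mkcond; apply: ler_sum => s _; case: eqP; rewrite ?mul1r ?mul0r.
Qed.

(* Weighting by f: on the product of supports f is bounded by its maximum
   there, and outside that set P vanishes, leaving only Q. *)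
Lemma prodMeasure_weighted_l1_le (f : prodSpace S -> R) :
  \sum_(y : prodSpace S) `|prodMeasure P y - prodMeasure Q y| * f y
  <= (\big[Num.max/0]_(y | in_prod_supp P y) f y)
       * \sum_(y : prodSpace S) `|prodMeasure P y - prodMeasure Q y|
     + (\big[Num.max/0]_(y : prodSpace S) f y)
       * \sum_(y : prodSpace S | ~~ in_prod_supp P y) prodMeasure Q y.
Proof.
rewrite !mulr_sumr [X in _ <= _ + X]big_mkcond -big_split /=.
apply: ler_sum => y _; have [ys | yns] := boolP (in_prod_supp P y).
  rewrite mulrC addr0; apply: ler_wpM2r => //; exact: le_bigmax_cond.
have P0 : prodMeasure P y = 0.
  have [k Pk0] := not_in_prod_supp yns.
  by rewrite /prodMeasure (bigD1 k) //= Pk0 mul0r.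
have Qy_ge0 : 0 <= prodMeasure Q y by apply: prodr_ge0.
rewrite P0 sub0r normrN ger0_norm // mulrC -[X in X <= _]add0r.
apply: lerD; first by rewrite mulr_ge0 // bigmax_ge_id.
by apply: ler_wpM2r => //; exact: le_bigmax.
Qed.

End ProductMeasures.

Lemma l1_le_of_pointwise {R : numDomainType} {T : finType} (p q a : T -> R)
  (c : R) (hpq : forall s, `|q s - p s| <= a s + c) :
  \sum_(s : T) `|p s - q s| <= \sum_(s : T) a s + c * #|T|%:R.
Proof.
rewrite mulr_natr -sumr_const -big_split /=.
by apply: ler_sum => s _; rewrite distrC.
Qed.

(* Under the closeness hypothesis |q - p| <= sqrt(p xi) + c with c >= 0,
   q is at most c off the support of p, so its mass there is at most c |T|. *)
Lemma mass_off_supp_le_of_close {R : rcfType} {T : finType} (p q : T -> R)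
  (xi c : R) (hc : 0 <= c)
  (hpq : forall s, `|q s - p s| <= Num.sqrt (p s * xi) + c) :
  \sum_(s : T | p s == 0) q s <= c * #|T|%:R.
Proof.
rewrite mulr_natr -sumr_const big_mkcond /=.
apply: ler_sum => s _; case: eqP => [ps0 | _] //.
have := hpq s; rewrite ps0 mul0r sqrtr0 add0r subr0.
exact/le_trans/ler_norm.
Qed.

Theorem lemma2 (R : rcfType) (m : nat) (S : 'I_m -> finType)
  (P P' : forall i : 'I_m, S i -> R)
  (xi xi' : 'I_m -> R)
  (hP : forall i, is_distr (P i)) (hP' : forall i, is_distr (P' i))
  (hxi : forall i, 0 < xi i) (hxi' : forall i, 0 < xi' i)
  (hclose : forall i (yi : S i),
      `|P' i yi - P i yi| <= Num.sqrt (P i yi * xi i) + xi' i)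
  (f : prodSpace S -> R) (hf : forall y, 0 <= f y) :
  \sum_(y : prodSpace S) `|prodMeasure P y - prodMeasure P' y| * f y
  <= (\big[Num.max/0]_(y : prodSpace S | in_prod_supp P y) f y)
       * (\sum_(i < m) \sum_(yi : S i) Num.sqrt (P i yi * xi i))
     + 3 * (\big[Num.max/0]_(y : prodSpace S) f y)
       * (\sum_(i < m) xi' i * #|S i|%:R).
Proof.
set Ms := \big[Num.max/0]_(y | in_prod_supp P y) f y.
set M := \big[Num.max/0]_(y : prodSpace S) f y.
set A := \sum_(i < m) _.
set B := \sum_(i < m) _.
have Ms_ge0 : 0 <= Ms by apply: bigmax_ge_id.
have M_ge0 : 0 <= M by apply: bigmax_ge_id.
have Ms_le_M : Ms <= M by apply: bigmax_le => // y _; apply: le_bigmax.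
have B_ge0 : 0 <= B.
  by apply: sumr_ge0 => i _; apply: mulr_ge0; [exact: ltW | exact: ler0n].
have l1_factors : \sum_(k < m) \sum_(s : S k) `|P k s - P' k s| <= A + B.
  by rewrite -big_split /=; apply: ler_sum => k _; apply: l1_le_of_pointwise.
have outside_factors : \sum_(k < m) \sum_(s : S k | P k s == 0) P' k s <= B.
  by apply: ler_sum => k _; apply: mass_off_supp_le_of_close (ltW (hxi' k)) _.
have l1 := le_trans (prodMeasure_l1_le hP hP') l1_factors.
have out := le_trans (prodMeasure_mass_outside_supp hP hP') outside_factors.
apply: (le_trans (prodMeasure_weighted_l1_le hP hP' f)); rewrite -/Ms -/M.
(* Ms (A + B) + M B <= Ms A + 3 M B, as Ms <= M and B >= 0. *)
have := ler_wpM2l Ms_ge0 l1; have := ler_wpM2l M_ge0 out.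
have := ler_wpM2r B_ge0 Ms_le_M; have : 0 <= M * B by rewrite mulr_ge0.
rewrite mulrDr -mulrA; lra.
Qed.
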